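(* A hyperfield $F$ admits a Krasner valuation if and only if the additive hypergroup $(F,+,0)$ of $F$ is superiorly canonical.
   Context: A canonical hypergroup is a triple $(H,+,0)$ where $H\neq\emptyset$, $+$ assigns to each pair a subset $x+y\subseteq H$ (for sets $A+B:=\bigcup_{a\in A,b\in B}a+b$), $0\in H$, such that $+$ is associative and commutative, each $x$ has a unique $-x$ with $0\in x+(-x)$, and $z\in x+y\Rightarrow y\in z+(-x)$; write $x-y:=x+(-y)$. A hyperfield is $(F,+,\cdot,0,1)$ with $(F,+,0)$ a canonical hypergroup, $(F,\cdot)$ commutative with $0$ absorbing, $x(y+z)=xy+xz$, and $F\setminus\{0\}$ an abelian group with neutral $1\neq 0$. A canonical hypergroup $H$ is superiorly canonical if: (SCH1) $x\in x+y$ implies $x+y=\{x\}$; (SCH2) $(x+y)\cap(z+t)\neq\emptyset$ implies $x+y\subseteq z+t$ or $z+t\subseteq x+y$; (SCH3) for $x\neq y$ and $z,t\in x-y$, $z-z=t-t$; (SCH4) if $x\in z-z$ and $y\notin z-z$ then $x-x\subseteq y-y$. Valuation on $F$: for an ordered abelian group $\Gamma$ and $\infty>\Gamma$ with $\gamma+\infty=\infty+\gamma=\infty$, a surjective map $v:F\to\Gamma\cup\{\infty\}$ with $vx=\infty\iff x=0$, $v(xy)=vx+vy$, $z\in x+y\Rightarrow vz\ge\min\{vx,vy\}$; $vF:=v(F\setminus\{0\})$. An initial segment of $\Gamma$ is $\rho\subseteq\Gamma$ with $\delta\in\rho,\gamma<\delta\Rightarrow\gamma\in\rho$; $\rho+\gamma:=\{\delta+\gamma:\delta\in\rho\}$;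 ''$\alpha>\rho+\gamma$'' means $\alpha\notin\rho+\gamma$. Krasner valuation: a valuation $v$ on $F$ such that (KVH1) for all $x,y\in F$ with $0\notin x+y$, $v(x+y)$ is a singleton; (KVH2) there is an initial segment $\rho_v$ of $vF$ with $0\in\rho_v$ (the norm) such that for all $x,y,z,t\in F$ with $z\in x+y$: $t\in x+y$ iff $vs>\rho_v+\min\{vx,vy\}$ for all $s\in z-t$. *)

Set Implicit Arguments.

(* hadd x y z  means  z \in x + y. *)
Definition canonical_hypergroup (H : Type) (hadd : H -> H -> H -> Prop)
  (zero : H) (neg : H -> H) : Prop :=
  (forall x y z w, (exists u, hadd x y u /\ hadd u z w) <->
                   (exists u, hadd y z u /\ hadd x u w)) /\
  (forall x y z, hadd x y z <-> hadd y x z) /\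
  (forall x z, hadd x zero z <-> z = x) /\
  (forall x, hadd x (neg x) zero) /\
  (forall x y, hadd x y zero -> y = neg x) /\
  (forall x y z, hadd x y z -> hadd z (neg x) y).

Record Hyperfield := {
  hcar :> Type;
  hadd : hcar -> hcar -> hcar -> Prop;
  hneg : hcar -> hcar;
  hmul : hcar -> hcar -> hcar;
  hzero : hcar;
  hone : hcar;
  hf_canonical : canonical_hypergroup hadd hzero hneg;
  hf_mulA : forall x y z, hmul x (hmul y z) = hmul (hmul x y) z;
  hf_mulC : forall x y, hmul x y = hmul y x;
  hf_mul1 : forall x, hmul hone x = x;
  hf_mul0 : forall x, hmul hzero x = hzero;
  hf_distr : forall x y z w,
      (exists u, hadd y z u /\ w = hmul x u) <-> hadd (hmul x y) (hmul x z) w;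
  hf_one_neq0 : hone <> hzero;
  hf_mul_neq0 : forall x y, x <> hzero -> y <> hzero -> hmul x y <> hzero;
  hf_inv : forall x, x <> hzero -> exists y, hmul x y = hone
}.

Arguments hadd {h}.
Arguments hneg {h}.
Arguments hmul {h}.
Arguments hzero {h}.
Arguments hone {h}.

Definition hsub {F : Hyperfield} (x y : F) : F -> Prop := hadd x (hneg y).

Definition superiorly_canonical (F : Hyperfield) : Prop :=
  (forall x y : F, hadd x y x -> forall w, hadd x y w <-> w = x) /\
  (forall x y z t : F, (exists w, hadd x y w /\ hadd z t w) ->
      (forall w, hadd x y w -> hadd z t w) \/
      (forall w, hadd z t w -> hadd x y w)) /\
  (forall x y z t : F, x <> y -> hsub x y z -> hsub x y t ->
      forall w, hsub z z w <-> hsub t t w) /\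
  (forall x y z : F, hsub z z x -> ~ hsub z z y ->
      forall w, hsub x x w -> hsub y y w).

Record OrderedAbGroup := {
  gcar :> Type;
  gadd : gcar -> gcar -> gcar;
  gzero : gcar;
  gopp : gcar -> gcar;
  gle : gcar -> gcar -> Prop;
  g_addA : forall a b c, gadd a (gadd b c) = gadd (gadd a b) c;
  g_addC : forall a b, gadd a b = gadd b a;
  g_add0 : forall a, gadd gzero a = a;
  g_addN : forall a, gadd (gopp a) a = gzero;
  g_le_refl : forall a, gle a a;
  g_le_trans : forall a b c, gle a b -> gle b c -> gle a c;
  g_le_anti : forall a b, gle a b -> gle b a -> a = b;
  g_le_total : forall a b, gle a b \/ gle b a;
  g_le_add : forall a b c, gle a b -> gle (gadd a c) (gadd b c)
}.

Arguments gadd {o}.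
Arguments gzero {o}.
Arguments gle {o}.

(* Gamma \cup {oo}, with None = oo *)
Definition ext_le {G : OrderedAbGroup} (a b : option G) : Prop :=
  match a, b with
  | _, None => True
  | None, Some _ => False
  | Some a', Some b' => gle a' b'
  end.

Definition ext_add {G : OrderedAbGroup} (a b : option G) : option G :=
  match a, b with
  | Some a', Some b' => Some (gadd a' b')
  | _, _ => None
  end.

Definition is_ext_min {G : OrderedAbGroup} (a b m : option G) : Prop :=
  (m = a /\ ext_le a b) \/ (m = b /\ ext_le b a).

Definition glt {G : OrderedAbGroup} (a b : G) : Prop := gle a b /\ a <> b.

Definition is_valuation (F : Hyperfield) (G : OrderedAbGroup)
  (v : F -> option G) : Prop :=
  (forall a : option G, exists x : F, v x = a) /\
  (forall x : F, v x = None <-> x = hzero) /\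
  (forall x y : F, v (hmul x y) = ext_add (v x) (v y)) /\
  (forall x y z : F, hadd x y z ->
      forall m, is_ext_min (v x) (v y) m -> ext_le m (v z)).

Definition value_group (F : Hyperfield) (G : OrderedAbGroup)
  (v : F -> option G) (g : G) : Prop :=
  exists x : F, x <> hzero /\ v x = Some g.

Arguments is_valuation {F G}.
Arguments value_group {F G}.

Definition initial_segment {G : OrderedAbGroup} (S rho : G -> Prop) : Prop :=
  (forall d, rho d -> S d) /\
  (forall d g, rho d -> S g -> glt g d -> rho g).

Definition in_shift {G : OrderedAbGroup} (rho : G -> Prop) (g : G)
  (alpha : option G) : Prop :=
  exists d, rho d /\ alpha = Some (gadd d g).

Definition krasner_valuation (F : Hyperfield) (G : OrderedAbGroup)
  (v : F -> option G) : Prop :=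
  is_valuation v /\
  (forall x y : F, ~ hadd x y hzero ->
     exists g : option G, forall a, (exists z, hadd x y z /\ v z = a) <-> a = g) /\
  (exists rho : G -> Prop,
     initial_segment (value_group v) rho /\ rho gzero /\
     forall (x y z t : F) (g : G), hadd x y z ->
       is_ext_min (v x) (v y) (Some g) ->
       (hadd x y t <-> forall s, hsub z t s -> ~ in_shift rho g (v s))).

Arguments krasner_valuation {F G}.

Definition admits_krasner_valuation (F : Hyperfield) : Prop :=
  exists (G : OrderedAbGroup) (v : F -> option G), krasner_valuation v.

(* Everything is governed by the sets x - x.  For a Krasner valuation with norm
   rho, KVH2 applied to 0 in x - x shows that x - x = { s | v s not in rho + v x }
   for x <> 0, a ball determined by v x; SCH1-SCH4 then follow from the
   monotonicity of rho + g in g and from KVH1.  Conversely, in a superiorly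
   canonical hypergroup the sets x - x are closed under addition (SCH1), totally
   ordered by inclusion (SCH2), and satisfy c (x - x) = cx - cx; so the classes
   x - x, x <> 0, form an ordered abelian group under (x - x)(y - y) = xy - xy,
   ordered by reverse inclusion, and x |-> x - x is a valuation.  Its norm is the
   set of classes r - r with r not in 1 - 1 (initial by SCH4), and KVH2 says that
   x + y is the ball z + (x - x) around any of its points z when y - y is
   contained in x - x; KVH1 is SCH3. *)

From Stdlib Require Import Classical ClassicalEpsilon FunctionalExtensionality
  PropExtensionality ProofIrrelevance.

Section Hypergroup.
Context {F : Hyperfield}.

Lemma hadd_assoc (x y z w : F) : (exists u, hadd x y u /\ hadd u z w) <->
  (exists u, hadd y z u /\ hadd x u w).
Proof. destruct (hf_canonical F) as [H _]. apply H. Qed.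

Lemma hadd_comm (x y z : F) : hadd x y z <-> hadd y x z.
Proof. destruct (hf_canonical F) as [_ [H _]]. apply H. Qed.

Lemma hadd0 (x z : F) : hadd x hzero z <-> z = x.
Proof. destruct (hf_canonical F) as [_ [_ [H _]]]. apply H. Qed.

Lemma hadd_neg (x : F) : hadd x (hneg x) hzero.
Proof. destruct (hf_canonical F) as [_ [_ [_ [H _]]]]. apply H. Qed.

Lemma hneg_unique (x y : F) : hadd x y hzero -> y = hneg x.
Proof. destruct (hf_canonical F) as [_ [_ [_ [_ [H _]]]]]. apply H. Qed.

Lemma hadd_rev (x y z : F) : hadd x y z -> hadd z (hneg x) y.
Proof. destruct (hf_canonical F) as [_ [_ [_ [_ [_ H]]]]]. apply H. Qed.

Lemma hadd0l (x z : F) : hadd hzero x z <-> z = x.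
Proof. rewrite hadd_comm. apply hadd0. Qed.

Lemma hnegK (x : F) : hneg (hneg x) = x.
Proof. symmetry. apply hneg_unique, hadd_comm, hadd_neg. Qed.

Lemma hneg0 : hneg (@hzero F) = hzero.
Proof. symmetry. apply (proj1 (hadd0l _ _)), hadd_neg. Qed.

Lemma hadd_inhabited (x y : F) : exists z, hadd x y z.
Proof.
  destruct (proj2 (hadd_assoc x y (hneg y) x)) as [u [Hu _]].
  - exists hzero. split; [apply hadd_neg | apply hadd0; reflexivity].
  - exists u; exact Hu.
Qed.

Lemma hadd_interchange (x y p x' y' q s : F) :
  hadd x y p -> hadd x' y' q -> hadd p q s ->
  exists a c, hadd x x' a /\ hadd y y' c /\ hadd a c s.
Proof.
  intros H1 H2 H3.
  destruct (proj1 (hadd_assoc x y q s) (ex_intro _ p (conj H1 H3))) as [u1 [Hu1 Hs]].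
  apply hadd_comm in Hu1.
  destruct (proj1 (hadd_assoc x' y' y u1) (ex_intro _ q (conj H2 Hu1))) as [u2 [Hu2 Hu1']].
  destruct (proj2 (hadd_assoc x x' u2 s) (ex_intro _ u1 (conj Hu1' Hs))) as [a [Ha Has]].
  exists a, u2. repeat split; auto. apply hadd_comm; auto.
Qed.

Lemma hmul1r (x : F) : hmul x hone = x.
Proof. rewrite hf_mulC. apply hf_mul1. Qed.

Lemma hmul0r (x : F) : hmul x hzero = hzero.
Proof. rewrite hf_mulC. apply hf_mul0. Qed.

Lemma hmulN1 (x : F) : hmul x (hneg hone) = hneg x.
Proof.
  apply hneg_unique. rewrite <- (hmul1r x) at 1. apply hf_distr.
  exists hzero. split; [apply hadd_neg | symmetry; apply hmul0r].
Qed.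

Lemma hmulN (c x : F) : hmul c (hneg x) = hneg (hmul c x).
Proof. rewrite <- (hmulN1 x), <- (hmulN1 (hmul c x)). apply hf_mulA. Qed.

Lemma hadd_mul (c x y z : F) : hadd x y z -> hadd (hmul c x) (hmul c y) (hmul c z).
Proof. intro H. apply hf_distr. eauto. Qed.

Lemma hadd_negE (x y z : F) : hadd x y z -> hadd (hneg x) (hneg y) (hneg z).
Proof.
  intro H. pose proof (hadd_mul (hneg hone) _ _ _ H) as H0.
  rewrite !(hf_mulC F (hneg hone)), !hmulN1 in H0. exact H0.
Qed.

(* Choice of multiplicative inverse, with junk value [0] at [0]. *)
Definition hinv (x : F) : F :=
  match excluded_middle_informative (x = hzero) with
  | left _ => hzero
  | right Hx => proj1_sig (constructive_indefinite_description _ (hf_inv F Hx))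
  end.

Lemma hmulV (x : F) : x <> hzero -> hmul x (hinv x) = hone.
Proof.
  intro Hx. unfold hinv. destruct (excluded_middle_informative _); [contradiction|].
  apply proj2_sig.
Qed.

Lemma hinv_neq0 (x : F) : x <> hzero -> hinv x <> hzero.
Proof.
  intros Hx e. apply (hf_one_neq0 F). rewrite <- (hmulV x Hx), e. apply hmul0r.
Qed.

Lemma hmulKV (x u : F) : x <> hzero -> hmul (hinv x) (hmul x u) = u.
Proof. intro Hx. rewrite hf_mulA, (hf_mulC F (hinv x) x), hmulV by exact Hx. apply hf_mul1. Qed.

Lemma hsub_selfE (x a : F) : hsub x x a <-> hadd x a x.
Proof.
  unfold hsub. split; intro H.
  - apply hadd_comm, hadd_rev in H. rewrite hnegK in H. apply hadd_comm. exact H.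
  - apply hadd_rev in H. exact H.
Qed.

Lemma hsub_self0 (x : F) : hsub x x hzero.
Proof. apply hadd_neg. Qed.

Lemma hsub00 (a : F) : hsub hzero hzero a <-> a = hzero.
Proof. unfold hsub. rewrite hneg0. apply hadd0. Qed.

Lemma hsub_selfN (x a : F) : hsub x x a -> hsub x x (hneg a).
Proof.
  unfold hsub. intro H. apply hadd_negE in H. rewrite hnegK in H. apply hadd_comm. exact H.
Qed.

Lemma hsub_selfM (c x a : F) :
  hsub (hmul c x) (hmul c x) a <-> exists u, hsub x x u /\ a = hmul c u.
Proof. unfold hsub. rewrite <- hmulN. symmetry. apply hf_distr. Qed.

Lemma hsub_selfM_subset (c x y : F) : (forall a, hsub x x a -> hsub y y a) ->
  forall a, hsub (hmul c x) (hmul c x) a -> hsub (hmul c y) (hmul c y) a.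
Proof.
  intros H a Ha. apply hsub_selfM in Ha. destruct Ha as [u [Hu ->]].
  apply hsub_selfM. eauto.
Qed.

Lemma hsub_selfM_eq (c x y : F) :
  hsub x x = hsub y y -> hsub (hmul c x) (hmul c x) = hsub (hmul c y) (hmul c y).
Proof.
  intro H. apply functional_extensionality. intro a. apply propositional_extensionality.
  split; apply hsub_selfM_subset; rewrite H; auto.
Qed.

Lemma hsub_selfM1 (x u : F) : hsub hone hone u -> hsub x x (hmul x u).
Proof. intro H. rewrite <- (hmul1r x) at 1 2. apply hsub_selfM. eauto. Qed.

Lemma hsub_self_split (x b : F) : hsub x x b -> exists u, hsub hone hone u /\ b = hmul x u.
Proof. rewrite <- (hmul1r x) at 1 2. apply hsub_selfM. Qed.

End Hypergroup.

Section OrderedGroup.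
Variable G : OrderedAbGroup.

Lemma g_add0r (a : G) : gadd a gzero = a.
Proof. rewrite g_addC. apply g_add0. Qed.

Lemma g_addNr (a : G) : gadd a (gopp G a) = gzero.
Proof. rewrite g_addC. apply g_addN. Qed.

Lemma g_addrK (a b : G) : gadd (gadd a b) (gopp G b) = a.
Proof. rewrite <- g_addA, g_addNr. apply g_add0r. Qed.

Lemma g_addNrK (a b : G) : gadd (gadd a (gopp G b)) b = a.
Proof. rewrite <- g_addA, g_addN. apply g_add0r. Qed.

Lemma g_idem_eq0 (c : G) : gadd c c = c -> c = gzero.
Proof. intro H. rewrite <- (g_addrK c c), H. apply g_addNr. Qed.

Lemma g_double_eq0 (c : G) : gadd c c = gzero -> c = gzero.
Proof.
  intro H. destruct (g_le_total _ c gzero) as [Hc|Hc];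
    pose proof (g_le_add _ _ _ c Hc) as H1; rewrite H, g_add0 in H1;
    apply g_le_anti; auto.
Qed.

End OrderedGroup.

Section KrasnerSuperiorlyCanonical.
Context {F : Hyperfield} {G : OrderedAbGroup} (v : F -> option G) (rho : G -> Prop).
Hypothesis v_valuation : is_valuation v.
Hypothesis v_KVH1 : forall x y : F, ~ hadd x y hzero ->
  exists g : option G, forall a, (exists z, hadd x y z /\ v z = a) <-> a = g.
Hypothesis rho_initial : initial_segment (value_group v) rho.
Hypothesis rho0 : rho gzero.
Hypothesis v_KVH2 : forall (x y z t : F) (g : G), hadd x y z ->
  is_ext_min (v x) (v y) (Some g) ->
  (hadd x y t <-> forall s, hsub z t s -> ~ in_shift rho g (v s)).

Lemma v_eq_None (x : F) : v x = None <-> x = hzero.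
Proof. apply v_valuation. Qed.

Lemma v_mul (x y : F) : v (hmul x y) = ext_add (v x) (v y).
Proof. apply v_valuation. Qed.

Lemma v_nz (x : F) : x <> hzero -> exists g, v x = Some g.
Proof.
  intro Hx. destruct (v x) as [g|] eqn:E; eauto. apply v_eq_None in E. contradiction.
Qed.

Lemma value_groupT (g : G) : value_group v g.
Proof.
  destruct v_valuation as [Hsurj [HNone _]]. destruct (Hsurj (Some g)) as [x Hx].
  exists x. split; auto. intro e. apply HNone in e. congruence.
Qed.

Lemma rho_le (d' d : G) : gle d' d -> rho d -> rho d'.
Proof.
  intros Hle Hd. destruct (classic (d' = d)) as [->|Hne]; auto.
  apply (proj2 rho_initial) with d; auto. apply value_groupT. split; auto.
Qed.

Lemma in_shift_self (g : G) : in_shift rho g (Some g).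
Proof. exists gzero. split; auto. rewrite g_add0. reflexivity. Qed.

Lemma in_shift_le (g a b : G) :
  gle b a -> in_shift rho g (Some a) -> in_shift rho g (Some b).
Proof.
  intros Hle [d [Hd e]]. injection e as ->.
  exists (gadd b (gopp G g)). split.
  - apply rho_le with d; auto.
    pose proof (g_le_add _ _ _ (gopp G g) Hle) as H. rewrite g_addrK in H. exact H.
  - rewrite g_addNrK. reflexivity.
Qed.

Lemma in_shift_mono (g1 g2 : G) a : gle g1 g2 -> in_shift rho g1 a -> in_shift rho g2 a.
Proof.
  intros Hle [d [Hd ->]].
  exists (gadd (gadd d g1) (gopp G g2)). split.
  - apply rho_le with d; auto.
    pose proof (g_le_add _ _ _ (gopp G g2) (g_le_add _ _ _ d Hle)) as H.
    rewrite (g_addC _ g2 d), g_addrK, (g_addC _ g1 d) in H. exact H.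
  - rewrite g_addNrK. reflexivity.
Qed.

Lemma v_one : v hone = Some gzero.
Proof.
  destruct (v_nz hone (hf_one_neq0 F)) as [e He].
  pose proof (v_mul hone hone) as H. rewrite hf_mul1, He in H. injection H as H.
  rewrite He, (g_idem_eq0 _ _ (eq_sym H)). reflexivity.
Qed.

Lemma v_neg_one : v (hneg hone) = Some gzero.
Proof.
  assert (Hnz : hneg (@hone F) <> hzero).
  { intro e. apply (hf_one_neq0 F). rewrite <- (hnegK hone), e. apply hneg0. }
  destruct (v_nz _ Hnz) as [c Hc].
  pose proof (v_mul (hneg hone) (hneg hone)) as H.
  rewrite hmulN1, hnegK, v_one, Hc in H. injection H as H.
  rewrite Hc, (g_double_eq0 _ _ (eq_sym H)). reflexivity.
Qed.

Lemma v_neg (x : F) : v (hneg x) = v x.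
Proof.
  rewrite <- hmulN1, v_mul, v_neg_one. destruct (v x); simpl; [rewrite g_add0r|]; reflexivity.
Qed.

(* KVH2 for the sum x + (-x) ∋ 0: the set x - x is a closed ball around 0. *)
Lemma hsub_self_shift (x a : F) (g : G) :
  v x = Some g -> (hsub x x a <-> ~ in_shift rho g (v a)).
Proof.
  intro Hx. unfold hsub at 1.
  rewrite (v_KVH2 x (hneg x) hzero a g (hadd_neg x)).
  - unfold hsub. split.
    + intro H. rewrite <- v_neg. apply H, hadd0l. reflexivity.
    + intros H s Hs. apply hadd0l in Hs. subst. rewrite v_neg. exact H.
  - left. rewrite v_neg, Hx. split; [reflexivity | apply g_le_refl].
Qed.

Lemma is_ext_min_exists (x y : F) : ~ (x = hzero /\ y = hzero) ->
  exists g, is_ext_min (v x) (v y) (Some g).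
Proof.
  intro Hxy. destruct (v x) as [a|] eqn:Ea; destruct (v y) as [b|] eqn:Eb.
  - destruct (g_le_total _ a b); [exists a; left | exists b; right]; auto.
  - exists a. left. simpl. auto.
  - exists b. right. simpl. auto.
  - exfalso. apply Hxy. split; apply v_eq_None; auto.
Qed.

Lemma krasner_SCH1 (x y : F) : hadd x y x -> forall w, hadd x y w <-> w = x.
Proof.
  intros H w. destruct (classic (x = hzero)) as [->|Hx].
  { apply hadd0l in H. subst y. apply hadd0. }
  destruct (v_nz x Hx) as [gx Hgx].
  assert (Hy : ~ in_shift rho gx (v y)) by (apply (hsub_self_shift x y gx Hgx), hsub_selfE; auto).
  destruct (classic (y = hzero)) as [->|Hynz]; [apply hadd0|].
  destruct (v_nz y Hynz) as [gy Hgy]. rewrite Hgy in Hy.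
  assert (Hle : gle gx gy).
  { destruct (g_le_total _ gx gy) as [h|h]; auto. exfalso.
    apply Hy, in_shift_le with gx; auto. apply in_shift_self. }
  rewrite (v_KVH2 x y x w gx H) by (left; rewrite Hgx, Hgy; auto).
  rewrite <- (v_KVH2 x hzero x w gx); [apply hadd0 | apply hadd0; reflexivity |].
  left. rewrite Hgx, (proj2 (v_eq_None hzero) eq_refl). split; [reflexivity | exact I].
Qed.

Lemma krasner_SCH2 (x y z t : F) : (exists w, hadd x y w /\ hadd z t w) ->
  (forall w, hadd x y w -> hadd z t w) \/ (forall w, hadd z t w -> hadd x y w).
Proof.
  intros [w [H1 H2]].
  destruct (classic (x = hzero /\ y = hzero)) as [[-> ->]|Hxy].
  { left. intros w' H'. apply hadd0 in H'. apply hadd0 in H1. subst. auto. }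
  destruct (classic (z = hzero /\ t = hzero)) as [[-> ->]|Hzt].
  { right. intros w' H'. apply hadd0 in H'. apply hadd0 in H2. subst. auto. }
  destruct (is_ext_min_exists x y Hxy) as [g1 Hm1].
  destruct (is_ext_min_exists z t Hzt) as [g2 Hm2].
  destruct (g_le_total _ g1 g2) as [Hle|Hle]; [right | left]; intros w' H';
    rewrite (v_KVH2 _ _ w w' _ H1 Hm1) in *; rewrite (v_KVH2 _ _ w w' _ H2 Hm2) in *;
    intros s Hs Hsh; apply (H' s Hs); eapply in_shift_mono; eauto.
Qed.

Lemma krasner_SCH3 (x y z t : F) : x <> y -> hsub x y z -> hsub x y t ->
  forall w, hsub z z w <-> hsub t t w.
Proof.
  intros Hxy Hz Ht w.
  assert (H0 : ~ hadd x (hneg y) hzero).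
  { intro H0. apply hneg_unique in H0. apply Hxy. rewrite <- (hnegK y), H0, hnegK. reflexivity. }
  destruct (v_KVH1 x (hneg y) H0) as [g Hg].
  assert (Ez : v z = g) by (apply Hg; eauto).
  assert (Et : v t = g) by (apply Hg; eauto).
  assert (Hznz : z <> hzero) by (intros ->; contradiction).
  destruct (v_nz z Hznz) as [gz Hgz].
  rewrite (hsub_self_shift z w gz Hgz), (hsub_self_shift t w gz); [tauto | congruence].
Qed.

Lemma krasner_SCH4 (x y z : F) : hsub z z x -> ~ hsub z z y ->
  forall w, hsub x x w -> hsub y y w.
Proof.
  intros Hx Hy w Hw.
  destruct (classic (z = hzero)) as [->|Hz].
  { apply hsub00 in Hx. subst x. apply hsub00 in Hw. subst w. apply hsub_self0. }
  destruct (classic (x = hzero)) as [->|Hxz].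
  { apply hsub00 in Hw. subst w. apply hsub_self0. }
  assert (Hynz : y <> hzero) by (intros ->; apply Hy, hsub_self0).
  destruct (v_nz z Hz) as [gz Hgz].
  destruct (v_nz x Hxz) as [gx Hgx].
  destruct (v_nz y Hynz) as [gy Hgy].
  rewrite (hsub_self_shift z x gz Hgz), Hgx in Hx.
  rewrite (hsub_self_shift z y gz Hgz), Hgy in Hy.
  assert (Hle : gle gy gx).
  { destruct (g_le_total _ gy gx) as [h|h]; auto. exfalso.
    apply Hx, in_shift_le with gy; auto. apply NNPP. auto. }
  rewrite (hsub_self_shift x w gx Hgx) in Hw. rewrite (hsub_self_shift y w gy Hgy).
  intro Hs. apply Hw, in_shift_mono with gy; auto.
Qed.

Lemma krasner_superiorly_canonical : superiorly_canonical F.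
Proof.
  split; [exact krasner_SCH1 | split; [exact krasner_SCH2 | split]];
    [exact krasner_SCH3 | exact krasner_SCH4].
Qed.

End KrasnerSuperiorlyCanonical.

Section SuperiorlyCanonicalKrasner.
Variable F : Hyperfield.
Hypothesis SC : superiorly_canonical F.

Lemma hadd_hsub_self (x a : F) : hsub x x a -> forall w, hadd x a w <-> w = x.
Proof. intro H. apply (proj1 SC), hsub_selfE, H. Qed.

Lemma hsub_self_hadd_closed (x a c w : F) :
  hsub x x a -> hsub x x c -> hadd a c w -> hsub x x w.
Proof.
  intros Ha Hc Hw. apply hsub_selfE. destruct (hadd_inhabited x w) as [p Hp].
  destruct (proj2 (hadd_assoc x a c p) (ex_intro _ w (conj Hw Hp))) as [u [H1 H2]].
  apply (hadd_hsub_self x a Ha) in H1. subst u.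
  apply (hadd_hsub_self x c Hc) in H2. subst p. exact Hp.
Qed.

Lemma hsub_self_hadd_subset (x y z : F) : hadd x y z ->
  (forall a, hsub y y a -> hsub x x a) -> forall b, hsub z z b -> hsub x x b.
Proof.
  intros H Hyx b Hb. destruct (hsub_self_split z b Hb) as [u [Hu ->]].
  rewrite (hf_mulC F z u).
  apply hsub_self_hadd_closed with (hmul u x) (hmul u y); [| | apply hadd_mul, H];
    [| apply Hyx]; rewrite hf_mulC; apply hsub_selfM1, Hu.
Qed.

Lemma hsub_self_notin (x : F) : x <> hzero -> ~ hsub x x x.
Proof.
  intros Hx H. apply hsub_selfN in H. apply Hx. symmetry.
  apply (hadd_hsub_self x _ H hzero), hadd_neg.
Qed.

Lemma hadd_absorb (x y z a t : F) :
  hadd x y z -> hsub x x a -> hadd z a t -> hadd x y t.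
Proof.
  intros H Ha Ht.
  destruct (proj1 (hadd_assoc x y a t) (ex_intro _ z (conj H Ht))) as [u [Hu1 Hu2]].
  apply hadd_comm in Hu1.
  destruct (proj2 (hadd_assoc x a y t) (ex_intro _ u (conj Hu1 Hu2))) as [u' [H1 H2]].
  apply (hadd_hsub_self x a Ha) in H1. subst. exact H2.
Qed.

Lemma hadd_ball (x y z : F) : (forall a, hsub y y a -> hsub x x a) -> hadd x y z ->
  forall t, hadd x y t <-> (forall s, hsub z t s -> hsub x x s).
Proof.
  intros Hyx H t. split.
  - intros Ht s Hst. apply hadd_negE in Ht.
    destruct (hadd_interchange _ _ _ _ _ _ _ H Ht Hst) as [a [c [Ha [Hc Hac]]]].
    apply hsub_self_hadd_closed with a c; auto.
  - intros Hall. destruct (hadd_inhabited z (hneg t)) as [s Hs].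
    pose proof (Hall s Hs) as HD.
    apply hadd_comm, hadd_rev in Hs. rewrite hnegK in Hs. apply hadd_rev in Hs.
    apply hadd_absorb with z (hneg s); auto. apply hsub_selfN, HD.
Qed.

Lemma hsub_selfM_eq2 (x x' y y' : F) : hsub x x = hsub x' x' -> hsub y y = hsub y' y' ->
  hsub (hmul x y) (hmul x y) = hsub (hmul x' y') (hmul x' y').
Proof.
  intros Ex Ey. rewrite (hsub_selfM_eq x _ _ Ey), !(hf_mulC F _ y').
  apply hsub_selfM_eq, Ex.
Qed.

Lemma hsub_selfM_cancel (x u r : F) : x <> hzero ->
  hsub (hmul x u) (hmul x u) = hsub (hmul x r) (hmul x r) -> hsub u u = hsub r r.
Proof.
  intros Hx E. apply (hsub_selfM_eq (hinv x)) in E. rewrite !hmulKV in E by exact Hx. exact E.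
Qed.

(* Makes [canonical_norm] independent of the chosen representative r. *)
Lemma hsub11_transfer (a r : F) :
  hsub hone hone a -> a <> hzero -> hsub a a = hsub r r -> hsub hone hone r.
Proof.
  intros Ha Hnz E.
  apply (hsub_selfM_eq (hinv a)) in E. rewrite (hf_mulC F _ a), hmulV in E by exact Hnz.
  rewrite E. pose proof (hsub_selfM1 (hmul (hinv a) r) a Ha) as H1.
  rewrite (hf_mulC F _ r), <- hf_mulA, (hf_mulC F (hinv a) a), hmulV, hmul1r in H1
    by exact Hnz.
  rewrite (hf_mulC F (hinv a) r). exact H1.
Qed.


Definition vclass := {S : F -> Prop | exists x : F, x <> hzero /\ S = hsub x x}.

Definition vcls (x : F) (Hx : x <> hzero) : vclass :=
  exist _ (hsub x x) (ex_intro _ x (conj Hx eq_refl)).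

Definition vrep (S : vclass) : F :=
  proj1_sig (constructive_indefinite_description _ (proj2_sig S)).

Lemma vrep_spec (S : vclass) : vrep S <> hzero /\ proj1_sig S = hsub (vrep S) (vrep S).
Proof. unfold vrep. apply proj2_sig. Qed.

Lemma vrep_neq0 (S : vclass) : vrep S <> hzero.
Proof. apply vrep_spec. Qed.

Lemma vclass_ext (S T : vclass) : proj1_sig S = proj1_sig T -> S = T.
Proof.
  destruct S as [S HS], T as [T HT]. simpl. intros <-. f_equal. apply proof_irrelevance.
Qed.

Lemma vcls_inj (x y : F) Hx Hy : vcls x Hx = vcls y Hy -> hsub x x = hsub y y.
Proof. intro E. exact (f_equal (@proj1_sig _ _) E). Qed.

Lemma vcls_vrep (S : vclass) : vcls (vrep S) (vrep_neq0 S) = S.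
Proof. apply vclass_ext. symmetry. apply vrep_spec. Qed.

Definition vadd (S T : vclass) : vclass :=
  vcls (hmul (vrep S) (vrep T)) (hf_mul_neq0 F (vrep_neq0 S) (vrep_neq0 T)).
Definition vzero : vclass := vcls hone (hf_one_neq0 F).
Definition vopp (S : vclass) : vclass := vcls (hinv (vrep S)) (hinv_neq0 _ (vrep_neq0 S)).
Definition vle (S T : vclass) : Prop := forall a, proj1_sig T a -> proj1_sig S a.

Lemma vadd_vcls (x y : F) Hx Hy :
  vadd (vcls x Hx) (vcls y Hy) = vcls (hmul x y) (hf_mul_neq0 F Hx Hy).
Proof.
  apply vclass_ext. simpl.
  apply hsub_selfM_eq2; symmetry; apply (vrep_spec (vcls _ _)).
Qed.

Lemma vaddA (S T U : vclass) : vadd S (vadd T U) = vadd (vadd S T) U.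
Proof.
  rewrite <- (vcls_vrep S), <- (vcls_vrep T), <- (vcls_vrep U), !vadd_vcls.
  apply vclass_ext. simpl. rewrite hf_mulA. reflexivity.
Qed.

Lemma vaddC (S T : vclass) : vadd S T = vadd T S.
Proof. apply vclass_ext. simpl. rewrite hf_mulC. reflexivity. Qed.

Lemma vadd0 (S : vclass) : vadd vzero S = S.
Proof.
  rewrite <- (vcls_vrep S). unfold vzero. rewrite vadd_vcls.
  apply vclass_ext. simpl. rewrite hf_mul1. reflexivity.
Qed.

Lemma vaddN (S : vclass) : vadd (vopp S) S = vzero.
Proof.
  rewrite <- (vcls_vrep S) at 2. unfold vopp.
  rewrite vadd_vcls.
  apply vclass_ext. simpl. rewrite hf_mulC, hmulV by apply vrep_neq0. reflexivity.
Qed.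

Lemma vle_refl (S : vclass) : vle S S.
Proof. intro; auto. Qed.

Lemma vle_trans (S T U : vclass) : vle S T -> vle T U -> vle S U.
Proof. unfold vle. auto. Qed.

Lemma vle_anti (S T : vclass) : vle S T -> vle T S -> S = T.
Proof.
  intros H1 H2. apply vclass_ext, functional_extensionality. intro a.
  apply propositional_extensionality. split; auto.
Qed.

(* SCH2 applied to x + (-x) and y + (-y), which share 0. *)
Lemma vle_total (S T : vclass) : vle S T \/ vle T S.
Proof.
  unfold vle. rewrite (proj2 (vrep_spec S)), (proj2 (vrep_spec T)).
  destruct (proj1 (proj2 SC) (vrep S) (hneg (vrep S)) (vrep T) (hneg (vrep T)))
    as [H|H]; [exists hzero; split; apply hadd_neg | right | left]; exact H.
Qed.

Lemma vle_add (S T U : vclass) : vle S T -> vle (vadd S U) (vadd T U).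
Proof.
  unfold vle, vadd. simpl. rewrite (proj2 (vrep_spec S)), (proj2 (vrep_spec T)).
  rewrite !(hf_mulC F _ (vrep U)). apply hsub_selfM_subset.
Qed.

Definition value_group_of : OrderedAbGroup :=
  {| gcar := vclass; gadd := vadd; gzero := vzero; gopp := vopp; gle := vle;
     g_addA := vaddA; g_addC := vaddC; g_add0 := vadd0; g_addN := vaddN;
     g_le_refl := vle_refl; g_le_trans := vle_trans; g_le_anti := vle_anti;
     g_le_total := vle_total; g_le_add := vle_add |}.


Definition canonical_valuation (x : F) : option value_group_of :=
  match excluded_middle_informative (x = hzero) with
  | left _ => None
  | right Hx => Some (vcls x Hx)
  end.

Local Notation vv := canonical_valuation.

Lemma vv0 : vv hzero = None.
Proof. unfold vv. destruct (excluded_middle_informative _); congruence. Qed.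

Lemma vv_neq0 (x : F) (Hx : x <> hzero) : vv x = Some (vcls x Hx).
Proof.
  unfold vv. destruct (excluded_middle_informative _) as [|Hx']; [contradiction|].
  do 2 f_equal. apply proof_irrelevance.
Qed.

Lemma vv_le_subset (x y : F) : x <> hzero -> ext_le (vv x) (vv y) ->
  forall a, hsub y y a -> hsub x x a.
Proof.
  intros Hx Hle a Ha. destruct (classic (y = hzero)) as [->|Hy].
  - apply hsub00 in Ha. subst. apply hsub_self0.
  - rewrite (vv_neq0 x Hx), (vv_neq0 y Hy) in Hle. exact (Hle a Ha).
Qed.

Lemma vv_ultrametric (x y z : F) :
  hadd x y z -> ext_le (vv x) (vv y) -> ext_le (vv x) (vv z).
Proof.
  intros H Hle. destruct (classic (z = hzero)) as [->|Hz].
  { rewrite vv0. destruct (vv x); exact I. }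
  destruct (classic (x = hzero)) as [->|Hx].
  - exfalso. rewrite vv0 in Hle. destruct (classic (y = hzero)) as [->|Hy].
    + apply hadd0l in H. contradiction.
    + rewrite (vv_neq0 y Hy) in Hle. exact Hle.
  - rewrite (vv_neq0 x Hx), (vv_neq0 z Hz). intros a Ha.
    apply (hsub_self_hadd_subset x y z H); [apply vv_le_subset | exact Ha]; auto.
Qed.

Lemma vv_valuation : is_valuation vv.
Proof.
  split; [|split; [|split]].
  - intros [S|]; [exists (vrep S) | exists hzero; apply vv0].
    rewrite (vv_neq0 _ (vrep_neq0 S)), vcls_vrep. reflexivity.
  - intro x. unfold vv. destruct (excluded_middle_informative _); split; congruence.
  - intros x y. destruct (classic (x = hzero)) as [->|Hx].
    { rewrite hf_mul0, vv0. reflexivity. }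
    destruct (classic (y = hzero)) as [->|Hy].
    { rewrite hmul0r, vv0. destruct (vv x); reflexivity. }
    rewrite (vv_neq0 x Hx), (vv_neq0 y Hy), (vv_neq0 _ (hf_mul_neq0 F Hx Hy)).
    simpl. rewrite vadd_vcls. reflexivity.
  - intros x y z H m [[-> Hle]|[-> Hle]].
    + apply vv_ultrametric with y; auto.
    + apply vv_ultrametric with x; auto. apply hadd_comm. auto.
Qed.

(* SCH3: all elements of x - y (x <> y) have the same set z - z. *)
Lemma vv_KVH1 (x y : F) : ~ hadd x y hzero ->
  exists g, forall a, (exists z, hadd x y z /\ vv z = a) <-> a = g.
Proof.
  intros H0. destruct (hadd_inhabited x y) as [z0 Hz0]. exists (vv z0). intro a. split.
  - intros [z [Hz <-]].
    assert (Hznz : z <> hzero) by (intros ->; contradiction).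
    assert (Hz0nz : z0 <> hzero) by (intros ->; contradiction).
    rewrite (vv_neq0 z Hznz), (vv_neq0 z0 Hz0nz). do 2 f_equal.
    apply vclass_ext, functional_extensionality. intro w. apply propositional_extensionality.
    apply (proj1 (proj2 (proj2 SC)) x (hneg y)); unfold hsub; rewrite ?hnegK; auto.
    intros ->. apply H0, hadd_comm, hadd_neg.
  - intros ->. eauto.
Qed.

Definition canonical_norm (d : value_group_of) : Prop :=
  exists r (Hr : r <> hzero), ~ hsub hone hone r /\ d = vcls r Hr.

Local Notation rho := canonical_norm.

(* SCH4: if x lies in 1 - 1 and r does not, then x - x ⊆ r - r. *)
Lemma canonical_norm_initial : initial_segment (value_group vv) rho.
Proof.
  split.
  - intros d (r & Hr & _ & ->). exists r. split; auto. apply vv_neq0.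
  - intros d g (r & Hr & Hn & ->) (x & Hx & Hvx) [Hle Hne].
    rewrite (vv_neq0 x Hx) in Hvx. injection Hvx as <-.
    exists x, Hx. split; auto. intro Hx1. apply Hne, vle_anti; auto.
    intros w. apply (proj2 (proj2 (proj2 SC)) x r hone Hx1 Hn).
Qed.

Lemma canonical_norm0 : rho gzero.
Proof.
  exists hone, (hf_one_neq0 F). split; [apply hsub_self_notin, hf_one_neq0 | reflexivity].
Qed.

Lemma in_shift_canonical_norm (x s : F) (Hx : x <> hzero) :
  in_shift rho (vcls x Hx) (vv s) <-> ~ hsub x x s.
Proof.
  destruct (classic (s = hzero)) as [->|Hs].
  { rewrite vv0. split; [intros [d [_ e]]; discriminate | intro H; contradiction (hsub_self0 x)]. }
  rewrite (vv_neq0 s Hs). split.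
  - intros [d [(r & Hr & Hn & ->) e]] Hxs.
    assert (E : vcls s Hs = vadd (vcls r Hr) (vcls x Hx))
      by exact (f_equal (fun o => match o with Some c => c | None => vzero end) e).
    rewrite vadd_vcls in E. apply vcls_inj in E.
    destruct (hsub_self_split x s Hxs) as [u [Hu ->]].
    assert (Hu0 : u <> hzero) by (intros ->; apply Hs, hmul0r).
    rewrite (hf_mulC F r x) in E. apply hsub_selfM_cancel in E; [|exact Hx].
    apply Hn, hsub11_transfer with u; auto.
  - intro Hxs. set (r := hmul s (hinv x)).
    assert (Hr : r <> hzero) by (apply hf_mul_neq0, hinv_neq0; assumption).
    assert (Ers : hmul r x = s).
    { unfold r. rewrite <- hf_mulA, (hf_mulC F (hinv x) x), hmulV by exact Hx. apply hmul1r. }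
    exists (vcls r Hr). split.
    + exists r, Hr. split; auto. intro Hr1. apply Hxs.
      rewrite <- Ers, hf_mulC. apply hsub_selfM1, Hr1.
    + f_equal. simpl. rewrite vadd_vcls. apply vclass_ext. simpl. rewrite Ers. reflexivity.
Qed.

Lemma vv_KVH2_le (x y z t : F) (Hx : x <> hzero) :
  ext_le (vv x) (vv y) -> hadd x y z ->
  (hadd x y t <-> forall s, hsub z t s -> ~ in_shift rho (vcls x Hx) (vv s)).
Proof.
  intros Hle H. rewrite (hadd_ball x y z (vv_le_subset x y Hx Hle) H t).
  split; intros Hall s Hs; specialize (Hall s Hs);
    rewrite in_shift_canonical_norm in *; [tauto | apply NNPP, Hall].
Qed.

Lemma vv_KVH2 (x y z t : F) (g : value_group_of) : hadd x y z ->
  is_ext_min (vv x) (vv y) (Some g) ->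
  (hadd x y t <-> forall s, hsub z t s -> ~ in_shift rho g (vv s)).
Proof.
  intros H [[Hg Hle]|[Hg Hle]].
  - assert (Hx : x <> hzero) by (intros ->; rewrite vv0 in Hg; discriminate).
    rewrite (vv_neq0 x Hx) in Hg. injection Hg as ->. apply vv_KVH2_le; auto.
  - assert (Hy : y <> hzero) by (intros ->; rewrite vv0 in Hg; discriminate).
    rewrite (vv_neq0 y Hy) in Hg. injection Hg as ->.
    rewrite hadd_comm. apply vv_KVH2_le; auto. apply hadd_comm, H.
Qed.

Lemma canonical_valuation_krasner : krasner_valuation vv.
Proof.
  split; [exact vv_valuation | split; [exact vv_KVH1 |]].
  exists rho.
  split; [exact canonical_norm_initial | split; [exact canonical_norm0 | exact vv_KVH2]].
Qed.

End SuperiorlyCanonicalKrasner.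

Theorem theorem4p24 (F : Hyperfield) :
  admits_krasner_valuation F <-> superiorly_canonical F.
Proof.
  split.
  - intros (G & v & Hval & HK1 & rho & Hinit & Hrho0 & HK2).
    exact (krasner_superiorly_canonical v rho Hval HK1 Hinit Hrho0 HK2).
  - intro SC. exists (value_group_of F SC), (canonical_valuation F SC).
    apply canonical_valuation_krasner.
Qed.
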